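(* Let $A=(Q,\Sigma,T,q_0,Q_a,Q_r,\delta)$ be a simplified QPA-structure with reduced transition function $\varphi$. Then its evolution operator $U_A$ is unitary if and only if all the following hold: (1) for all $(q_1,\sigma_1,\tau_1)\in Q\times\Gamma\times\Delta$: $\sum_{(q,\omega)\in Q\times\Delta^*}|\varphi(q_1,\sigma_1,\tau_1,q,\omega)|^2=1$; (2) for all triples $(q_1,\sigma_1,\tau_1)\ne(q_2,\sigma_1,\tau_2)$ in $Q\times\Gamma\times\Delta$: $\sum_{(q,\omega)\in Q\times\Delta^*}\varphi^*(q_1,\sigma_1,\tau_1,q,\omega)\varphi(q_2,\sigma_1,\tau_2,q,\omega)=0$; (3) for all $(q_1,\sigma_1,\tau_1,\tau_2)\in Q\times\Gamma\times\Delta^2$: $\sum_{(q,\tau,\omega)\in Q\times\Delta\times\{\varepsilon,\tau_2,\tau_1\tau_2\}}|\varphi(q,\sigma_1,\tau,q_1,\omega)|^2=1$; (4) for all $(q_1,\sigma_1,\tau_1),(q_2,\sigma_1,\tau_2)\in Q\times\Gamma\times\Delta$ and all $\tau_3\in\Delta$: (a) $\sum_{(q,\tau)\in Q\times\Delta}\varphi^*(q_1,\sigma_1,\tau_1,q,\tau)\varphi(q_2,\sigma_1,\tau_2,q,\tau_3\tau)+\sum_{q\in Q}\varphi^*(q_1,\sigma_1,\tau_1,q,\varepsilon)\varphi(q_2,\sigma_1,\tau_2,q,\tau_3)=0$ and (b) $\sum_{q\in Q}\varphi^*(q_1,\sigma_1,\tau_1,q,\varepsilon)\varphi(q_2,\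sigma_1,\tau_2,q,\tau_2\tau_3)=0$.
   Context: $z^*$ is complex conjugate, $\varepsilon$ the empty word; an operator $U$ is unitary if $UU^*=U^*U=I$. A QPA-structure is a tuple $A=(Q,\Sigma,T,q_0,Q_a,Q_r,\delta)$ with $Q$ a finite set of states, $\Sigma$ a finite input alphabet, $T$ a finite stack alphabet, $q_0\in Q$, $Q_a,Q_r\subset Q$ disjoint, $\Gamma=\Sigma\cup\{\#,\$\}$ (end-markers not in $\Sigma$), $\Delta=T\cup\{Z_0\}$ ($Z_0\notin T$), and $\delta:Q\times\Gamma\times\Delta\times Q\times\{\downarrow,\to\}\times\Delta^*\to\mathbb{C}$ with values of modulus at most $1$, such that whenever $\delta(q,\alpha,\beta,q',d,\omega)\ne0$: $|\omega|\le2$; if $|\omega|=2$ then $\omega_1=\beta$; if $\beta=Z_0$ then $\omega\in Z_0T^*$; if $\beta\ne Z_0$ then $\omega\in T^*$. A configuration is $|\nu_i q_j\nu_k,\omega_l\rangle$ with $q_j\in Q$, $\nu_i\nu_k\in\#\Sigma^*\$$, input head on the first symbol of $\nu_k$, $\omega_l\in Z_0T^*$ the stack with head on its last symbol; $C$ is the set of configurations, $H_A=\ell_2(C)$. The evolution operator is defined on basis vectors: for $c=|\nu_i q_j\sigma\nu_k,\omega_l\tau\rangle$, $U_A|c\rangle=\sum_{(q,d,\omega)}\delta(q_j,\sigma,\tau,q,d,\omega)|f(c,d,q),\omega_l\omega\rangle$, where $f(c,\downarrow,q)=\nu_i q\sigma\nu_k$, $f(c,\to,q)=\nu_i\sigma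 q\nu_k$. The QPA-structure is simplified if there is a function $D:Q\to\{\downarrow,\to\}$ such that $\delta(q_1,\sigma,\tau,q,d,\omega)=0$ whenever $D(q)\ne d$; its reduced transition function is $\varphi(q_1,\sigma,\tau,q,\omega)=\delta(q_1,\sigma,\tau,q,D(q),\omega)$. *)

From HB Require Import structures.
From mathcomp Require Import all_boot all_order all_algebra.
Set Implicit Arguments. Unset Strict Implicit. Unset Printing Implicit Defensive.
Import Order.TTheory GRing.Theory Num.Theory.
Local Open Scope ring_scope.

(* Gamma = Sigma ∪ {#,$} : inl s = s, inr false = '#', inr true = '$'. *)
Definition Gam (Sigma : finType) : finType := (Sigma + bool)%type.
Definition lend (Sigma : finType) : Gam Sigma := inr false.
Definition rend (Sigma : finType) : Gam Sigma := inr true.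

(* Delta = T ∪ {Z0} : None = Z0, Some t = t. *)
Definition Delta (T : finType) : finType := option T.

(* Directions: false = "stay" (↓), true = "move right" (→). *)

Section QPA.
Variables (C : numClosedFieldType) (Q Sigma T : finType).

Definition transfun :=
  Q -> Gam Sigma -> Delta T -> Q -> bool -> seq (Delta T) -> C.

Definition QPA_transfun (delta : transfun) : Prop :=
  (forall q1 a b q d om, `|delta q1 a b q d om| <= 1) /\
  (forall q1 a b q d om, delta q1 a b q d om != 0 ->
     [/\ (size om <= 2)%N,
         size om = 2%N -> nth None om 0 = b,
         b = None -> exists s : seq T, om = None :: map Some s
       & b <> None -> exists s : seq T, om = map Some s]).

Definition simplified (delta : transfun) (D : Q -> bool) : Prop :=
  forall q1 a b q d om, D q != d -> delta q1 a b q d om = 0.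

Definition reduced (delta : transfun) (D : Q -> bool)
  (q1 : Q) (a : Gam Sigma) (b : Delta T) (q : Q) (om : seq (Delta T)) : C :=
  delta q1 a b q (D q) om.

(* All words over Delta of length <= 2 (each exactly once).  Under
   QPA_transfun every transition amplitude vanishes outside these words, so
   sums over Delta^* reduce to sums over this list. *)
Definition words_le2 : seq (seq (Delta T)) :=
  [:: [::]] ++ [seq [:: a] | a <- enum (Delta T)]
            ++ [seq [:: a; b] | a <- enum (Delta T), b <- enum (Delta T)].

(* Configurations: (w, p, q, st) where the tape is # w $, the head is on
   position p (0 = '#', size w + 1 = '$'), q is the state and st the whole
   stack (bottom first, top = last symbol). *)
Definition config : Type := (seq Sigma * nat * Q * seq (Delta T))%type.

Definition valid_config (c : config) : Prop :=
  let '(w, p, q, st) := c in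
  (p < size w + 2)%N /\ exists s : seq T, st = None :: map Some s.

Definition tape (w : seq Sigma) : seq (Gam Sigma) :=
  lend Sigma :: map inl w ++ [:: rend Sigma].

(* Head move; moving right from '$' wraps around to '#' (circular tape). *)
Definition move (w : seq Sigma) (d : bool) (p : nat) : nat :=
  if d then (p.+1 %% (size w + 2))%N else p.

(* U_A |c> as a finite formal sum of (amplitude, configuration) pairs. *)
Definition Ucol (delta : transfun) (c : config) : seq (C * config) :=
  let '(w, p, qj, st) := c in
  flatten [seq flatten [seq [seq (delta qj (nth (lend Sigma) (tape w) p)
                                        (last None st) q d om,
                                  (w, move w d p, q,
                                   take (size st).-1 st ++ om))
                              | om <- words_le2]
                        | d <- [:: false; true]]
          | q <- enum Q].

(* Matrix entry <c'| U_A |c>. *)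
Definition Uent (delta : transfun) (c' c : config) : C :=
  \sum_(x <- Ucol delta c) x.1 * (x.2 == c')%:R.

Definition fin_sum (f : config -> C) (s : C) : Prop :=
  exists L : seq config,
    [/\ uniq L, forall c, c \in L -> valid_config c,
        forall c, valid_config c -> f c != 0 -> c \in L
      & s = \sum_(c <- L) f c].

(* U_A unitary on l2(C): U^* U = I and U U^* = I, tested on basis vectors. *)
Definition unitary_U (delta : transfun) : Prop :=
  (forall c1 c2, valid_config c1 -> valid_config c2 ->
     fin_sum (fun c => (Uent delta c c1)^* * Uent delta c c2) (c1 == c2)%:R) /\
  (forall c1 c2, valid_config c1 -> valid_config c2 ->
     fin_sum (fun c => Uent delta c1 c * (Uent delta c2 c)^*) (c1 == c2)%:R).

End QPA.

From HB Require Import structures.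
From mathcomp Require Import all_boot all_order all_algebra.
From mathcomp Require Import ring.
Import Order.TTheory GRing.Theory Num.Theory.
Local Open Scope ring_scope.
Set Implicit Arguments. Unset Strict Implicit. Unset Printing Implicit Defensive.

(* The evolution operator moves a configuration to configurations in the same
   tape cell (the head move being fixed by the target state), so its rows and
   columns are finitely supported and all inner products are finite sums of
   products of amplitudes [phi].  Two columns in the same cell can only
   overlap when one popped stack extends the other by a word [x]; the
   transitions push at most two symbols, and for [x = [::]], [[:: t3]] and
   [[:: t3; t4]] their inner product is exactly the sum of (1)-(2), (4a) and
   (4b).  So (1), (2), (4) say that the columns are orthonormal.  Likewise the
   predecessors of a configuration are indexed by how many of the last two
   stack symbols the transition pushed, and the squared norm of a row is the
   sum of (3).  Finally, an isometry whose rows have norm 1 is a coisometry,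
   which gives the other half of unitarity. *)

Lemma drop_last1 (X : eqType) (s : seq X) x0 : s != [::] ->
  drop (size s - 1) s = [:: last x0 s].
Proof.
by case/lastP: s => // l a _; rewrite last_rcons size_rcons subn1 -cats1 drop_size_cat.
Qed.

Lemma drop_last2 (X : Type) (s : seq X) x0 : (2 <= size s)%N ->
  drop (size s - 2) s = [:: last x0 (take (size s).-1 s); last x0 s].
Proof.
case/lastP: s => [|l b] //; case/lastP: l => [|l a] //= _.
rewrite last_rcons !size_rcons -addn2 addnK -!cats1 -catA drop_size_cat //.
by rewrite addn2 /= take_cat ltnNge leqnSn /= subSn // subnn /= last_cat.
Qed.

Lemma mem_allpairs_pair (A B : eqType) (s : seq A) (t : seq B) a b :
  ((a, b) \in [seq (x, y) | x <- s, y <- t]) = (a \in s) && (b \in t).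
Proof.
apply/allpairsP/andP; first by case=> [[x y] [xs yt [-> ->]]].
by case=> xa yb; exists (a, b).
Qed.

Section SeqSums.
Variable C : numClosedFieldType.

Lemma big_mul_indicator (X : eqType) (l : seq X) (F : X -> C) y :
  uniq l -> \sum_(x <- l) F x * (x == y)%:R = (y \in l)%:R * F y.
Proof.
move=> ul; have [yl|yl] := boolP (y \in l).
  rewrite (bigD1_seq y) //= eqxx mulr1 mul1r big1 ?addr0 // => x /negbTE ->.
  by rewrite mulr0.
rewrite mul0r big_seq big1 // => x xl.
by case: eqP xl yl => [->->|] //; rewrite mulr0.
Qed.

Lemma sum_neq0_witness (I : eqType) (r : seq I) (F : I -> C) :
  \sum_(i <- r) F i != 0 -> exists2 i, i \in r & F i != 0.
Proof.
elim: r => [|a r IH]; first by rewrite big_nil eqxx.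
rewrite big_cons; have [->|Fa _] := eqVneq (F a) 0; last by exists a; rewrite ?inE ?eqxx.
by rewrite add0r => /IH [i ir nz]; exists i; rewrite // inE ir orbT.
Qed.

Lemma conjC_mul_eq0 (x y : C) : x = 0 \/ y = 0 -> x^* * y = 0.
Proof. by case=> ->; rewrite ?conjC0 ?mul0r ?mulr0. Qed.

Lemma unit_vector_peak (X : eqType) (S : seq X) (g : X -> C) x y :
  uniq S -> x \in S -> y \in S -> y != x ->
  \sum_(c <- S) g c * (g c)^* = 1 -> g x = 1 -> g y = 0.
Proof.
move=> uS xS yS yx; rewrite (bigD1_seq x) //= => + gx; rewrite gx conjC1 mulr1.
rewrite -[RHS]addr0 => /addrI/eqP.
rewrite psumr_eq0 => [/allP/(_ y yS)|c _]; last exact: mul_conjC_ge0.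
by rewrite yx mul_conjC_eq0 => /eqP.
Qed.

Lemma orthonormal_comb_norm (X Y : eqType) (S : seq X) (R : seq Y)
    (U : X -> Y -> C) (v : Y -> C) :
  uniq R -> {in R &, forall a b, \sum_(c <- S) (U c b)^* * U c a = (b == a)%:R} ->
  \sum_(c <- S) (\sum_(a <- R) U c a * v a) * (\sum_(a <- R) U c a * v a)^* =
  \sum_(a <- R) v a * (v a)^*.
Proof.
move=> uR orthoR; transitivity (\sum_(c <- S) \sum_(a <- R) \sum_(b <- R)
    (v a * (v b)^*) * ((U c b)^* * U c a)).
  apply: eq_bigr => c _; rewrite rmorph_sum mulr_suml; apply: eq_bigr => a _.
  by rewrite mulr_sumr; apply: eq_bigr => b _; rewrite rmorphM /=; ring.
rewrite exchange_big big_seq [RHS]big_seq; apply: eq_bigr => a aR.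
rewrite exchange_big /= (eq_big_seq (fun b => v a * (v b)^* * (b == a)%:R)).
  by rewrite big_mul_indicator // aR mul1r.
by move=> b bR; rewrite -mulr_sumr orthoR.
Qed.

End SeqSums.

Section FiniteSupport.
Variables (C : numClosedFieldType) (Q Sigma T : finType).
Local Notation config := (config Q Sigma T).
Local Notation valid := (@valid_config Q Sigma T).

Definition support_cover (f : config -> C) (L : seq config) :=
  [/\ uniq L, forall c, c \in L -> f c != 0 -> valid c &
      forall c, valid c -> f c != 0 -> c \in L].

Lemma support_cover_sum_eq f L1 L2 : support_cover f L1 -> support_cover f L2 ->
  \sum_(c <- L1) f c = \sum_(c <- L2) f c.
Proof.
move=> [u1 v1 s1] [u2 v2 s2].
have restrict (L L' : seq config) : (forall c, c \in L -> f c != 0 -> c \in L') ->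
    \sum_(c <- L) f c = \sum_(c <- L | c \in L') f c.
  move=> sub; rewrite [RHS]big_mkcond [LHS]big_seq [RHS]big_seq.
  apply: eq_bigr => c cL; case: ifP => // nL'.
  by apply/eqP; apply: contraFT nL' => /(sub c cL).
rewrite (restrict L1 L2) => [|c cL nz]; last exact: s2 (v1 c cL nz) nz.
rewrite (restrict L2 L1) => [|c cL nz]; last exact: s1 (v2 c cL nz) nz.
rewrite -[LHS]big_filter -[RHS]big_filter; apply/perm_big/uniq_perm; rewrite ?filter_uniq //.
by move=> c; rewrite !mem_filter andbC.
Qed.

Lemma fin_sum_cover f s L : support_cover f L ->
  fin_sum f s <-> s = \sum_(c <- L) f c.
Proof.
move=> sL; split.
  case=> L' [u' v' s' ->]; apply: support_cover_sum_eq => //.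
  by split => // c cL _; apply: v'.
move=> ->; case: sL => [u v sp].
exists [seq c <- L | f c != 0]; split.
- exact: filter_uniq.
- by move=> c; rewrite mem_filter => /andP [nz cL]; apply: v.
- by move=> c vc nz; rewrite mem_filter nz sp.
rewrite big_filter [RHS]big_mkcond; apply: eq_bigr => c _.
by case: eqVneq.
Qed.

Section Isometry.
Variable U : config -> config -> C.
Hypothesis U_isometry : forall c1 c2, valid c1 -> valid c2 ->
  fin_sum (fun c => (U c c1)^* * U c c2) (c1 == c2)%:R.

Lemma columns_cover (l : seq config) : (forall a, a \in l -> valid a) ->
  exists S, [/\ uniq S, forall c, c \in S -> valid c &
     forall a, a \in l -> forall c, valid c -> U c a != 0 -> c \in S].
Proof.
elim: l => [|a l IH] vl; first by exists [::].
have [|S [uS vS sS]] := IH; first by move=> b bl; apply: vl; rewrite inE bl orbT.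
have va : valid a by apply: vl; rewrite inE eqxx.
case: (U_isometry va va) => La [uL vL sL _].
exists (undup (La ++ S)); split.
- exact: undup_uniq.
- by move=> c; rewrite mem_undup mem_cat => /orP [/vL|/vS].
move=> b; rewrite inE => /orP [/eqP-> | bl] c vc nz; rewrite mem_undup mem_cat.
  by rewrite sL // mulf_neq0 // conjC_eq0.
by rewrite (sS b bl c vc nz) orbT.
Qed.

(* With [g := U U^* e_c1]: [g c1] is the squared norm of row [c1], i.e. 1,
   and [|g| = |U^* e_c1| = 1] as [U] is an isometry; hence [g = e_c1]. *)
Lemma coisometry_of_unit_rows :
  (forall c1, valid c1 -> fin_sum (fun c => U c1 c * (U c1 c)^*) 1) ->
  forall c1 c2, valid c1 -> valid c2 ->
     fin_sum (fun c => U c1 c * (U c2 c)^*) (c1 == c2)%:R.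
Proof.
move=> unit_rows c1 c2 v1 v2.
case: (unit_rows c1 v1) => R [uR vR sR row1].
have cR : support_cover (fun c => U c1 c * (U c2 c)^*) R.
  split => // [c cR _|c vc nz]; first exact: vR.
  apply: (sR c vc); rewrite /= mul_conjC_eq0.
  by apply: contraNneq nz => ->; rewrite mul0r.
apply/(fin_sum_cover _ cR).
have [<-|ne] := eqVneq c1 c2; first by rewrite row1.
have [S0 [uS0 vS0 sS0]] := columns_cover vR.
pose S := undup (c1 :: c2 :: S0).
have uS : uniq S by apply: undup_uniq.
have vS c : c \in S -> valid c.
  by rewrite mem_undup !inE => /orP [/eqP->|/orP [/eqP->|/vS0]].
have sS a c : a \in R -> valid c -> U c a != 0 -> c \in S.
  by move=> aR vc nz; rewrite mem_undup !inE (sS0 a aR c vc nz) !orbT.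
have c1S : c1 \in S by rewrite mem_undup inE eqxx.
have c2S : c2 \in S by rewrite mem_undup !inE eqxx orbT.
pose g c := \sum_(a <- R) U c a * (U c1 a)^*.
have col : {in R &, forall a b, \sum_(c <- S) (U c b)^* * U c a = (b == a)%:R}.
  move=> a b aR bR; have cS : support_cover (fun c => (U c b)^* * U c a) S.
    split => // [c cS _|c vc nz]; first exact: vS.
    by apply: (sS b) => //; apply: contraNneq nz => ->; rewrite conjC0 mul0r.
  by apply/esym/(fin_sum_cover _ cS).1/U_isometry; apply: vR.
have g_unit : \sum_(c <- S) g c * (g c)^* = 1.
  rewrite orthonormal_comb_norm // row1; apply: eq_bigr => a _.
  by rewrite conjCK mulrC.
have -> : \sum_(c <- R) U c1 c * (U c2 c)^* = (g c2)^*.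
  rewrite /g rmorph_sum; apply: eq_bigr => a _.
  by rewrite rmorphM /= conjCK mulrC.
by rewrite (unit_vector_peak uS c1S c2S _ g_unit) ?conjC0 // eq_sym.
Qed.

End Isometry.
End FiniteSupport.

Section Words.
Variables (C : numClosedFieldType) (T : finType).
Local Notation words := (words_le2 T).

Lemma mem_words_le2 om : (om \in words) = (size om <= 2)%N.
Proof.
rewrite /words_le2 !mem_cat.
case: om => [|a [|b [|c om]]] /=; rewrite ?inE ?eqxx //.
- by rewrite (@map_f _ _ (fun a => [:: a])) ?mem_enum ?orbT.
- by rewrite orbC (@allpairs_f _ _ _ (fun a b => [:: a; b])) ?mem_enum.
- apply/negbTE; rewrite negb_or; apply/andP; split; first by apply/mapP => -[].
  by apply/allpairsP => -[[x y] [_ _]].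
Qed.

Lemma uniq_words_le2 : uniq words.
Proof.
rewrite /words_le2 !cat_uniq /=.
rewrite map_inj_uniq ?enum_uniq; last by move=> x y [].
rewrite allpairs_uniq ?enum_uniq //; last by move=> [x y] [x' y'] _ _ [-> ->].
apply/and4P; split => //; apply/hasPn => s.
  by rewrite mem_cat => /orP [/mapP [x _ ->]|/allpairsP [[x y] [_ _ ->]]].
by move=> /allpairsP [[x y] [_ _ ->]] /=; apply/mapP => -[z _].
Qed.

Lemma sum_words_le2 (F : seq (Delta T) -> C) :
  \sum_(om <- words) F om = F [::] + \sum_(a : Delta T) F [:: a]
     + \sum_(a : Delta T) \sum_(b : Delta T) F [:: a; b].
Proof.
rewrite /words_le2 !big_cat big_seq1 big_map big_allpairs_dep /= !big_enum addrA.
by congr (_ + _); apply: eq_bigr => a _; rewrite big_enum.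
Qed.

Lemma sum_words_le2_indicator (F : seq (Delta T) -> C) y :
  ((2 < size y)%N -> F y = 0) ->
  \sum_(om <- words) F om * (om == y)%:R = F y.
Proof.
move=> Fy; rewrite big_mul_indicator ?uniq_words_le2 // mem_words_le2.
by case: leqP => [_|/Fy ->]; rewrite ?mul1r ?mul0r.
Qed.

End Words.

Section HeadMove.
Variables (Sigma : finType) (w : seq Sigma).

Definition unmove (d : bool) p :=
  if d then ((p + (size w).+1) %% (size w + 2))%N else p.

Lemma move_lt d p : (p < size w + 2)%N -> (move w d p < size w + 2)%N.
Proof. by case: d => //= _; rewrite ltn_pmod // addn2. Qed.

Lemma unmove_lt d p : (p < size w + 2)%N -> (unmove d p < size w + 2)%N.
Proof. by case: d => //= _; rewrite ltn_pmod // addn2. Qed.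

Lemma move_inj_eq d p p' : (p < size w + 2)%N -> (p' < size w + 2)%N ->
  (move w d p == move w d p') = (p == p').
Proof.
case: d => //= lp lp'.
by rewrite -[p.+1]addn1 -[p'.+1]addn1 eqn_modDr !modn_small.
Qed.

Lemma move_unmove d p : (p < size w + 2)%N -> move w d (unmove d p) = p.
Proof.
case: d => //= lp.
by rewrite -addn1 modnDml -addnA addn1 -[(size w).+2]addn2 modnDr modn_small.
Qed.

Lemma unmove_move d p : (p < size w + 2)%N -> unmove d (move w d p) = p.
Proof.
by move=> lp; apply/eqP; rewrite -(@move_inj_eq d) ?move_unmove ?unmove_lt ?move_lt.
Qed.

End HeadMove.

Section Evolution.
Variables (C : numClosedFieldType) (Q Sigma T : finType).
Variables (delta : transfun C Q Sigma T) (D : Q -> bool).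
Hypothesis delta_QPA : QPA_transfun delta.
Hypothesis delta_simplified : simplified delta D.
Local Notation phi := (reduced delta D).
Local Notation U := (Uent delta).
Local Notation config := (config Q Sigma T).
Local Notation words := (words_le2 T).
Local Notation valid := (@valid_config Q Sigma T).
Local Notation sym w p := (nth (lend Sigma) (tape w) p).
Local Notation pop st := (take (size st).-1 st).

Lemma phi_shape q1 a b q om : phi q1 a b q om != 0 ->
  [/\ (size om <= 2)%N, size om = 2%N -> nth None om 0 = b,
      b = None -> exists s : seq T, om = None :: map Some s
    & b <> None -> exists s : seq T, om = map Some s].
Proof. by case: delta_QPA => _ shape /shape. Qed.

Lemma phi_gt2 q1 a b q om : (2 < size om)%N -> phi q1 a b q om = 0.
Proof.
move=> lt; have [//|/phi_shape [le _ _ _]] := eqVneq (phi q1 a b q om) 0.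
by rewrite ltnNge le in lt.
Qed.

Lemma phi_pair_head q1 a b q x y : x != b -> phi q1 a b q [:: x; y] = 0.
Proof.
move=> nx; apply/eqP; apply: contraNT nx => /phi_shape [_ H _ _].
by rewrite -(H erefl).
Qed.

Lemma phi_push_Z0 q1 a b q x : phi q1 a b q [:: x; None] = 0.
Proof.
apply/eqP; apply: contraT => /phi_shape [_ _ H1 H2].
case: b H1 H2 => [t|] H1 H2; first by have [[|s0 [|s1 s]] //] := H2 ltac:(by []).
by have [[|s0 s] //] := H1 erefl.
Qed.

Lemma phi_Z0_notin q1 a q om : None \notin om -> phi q1 a None q om = 0.
Proof.
move=> nN; apply/eqP; apply: contraT => /phi_shape [_ _ H1 _].
by have [s E] := H1 erefl; rewrite E inE eqxx in nN.
Qed.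

Lemma phi_Z0_Some q1 a q t om : phi q1 a None q (Some t :: om) = 0.
Proof. by apply/eqP; apply: contraT => /phi_shape [_ _ H _]; have [s] := H erefl. Qed.

Lemma phi_Some_Z0_in q1 a t q om : None \in om -> phi q1 a (Some t) q om = 0.
Proof.
move=> iN; apply/eqP; apply: contraT => /phi_shape [_ _ _ H2].
by have [s E] := H2 ltac:(by []); rewrite E in iN; case/mapP: iN.
Qed.

Definition stack_ok (st : seq (Delta T)) := exists s : seq T, st = None :: map Some s.

Lemma stack_ok_pop_cat st : stack_ok st -> st = pop st ++ [:: last None st].
Proof.
case=> s ->; case/lastP: s => [|s t] //=.
by rewrite map_rcons -rcons_cons last_rcons size_rcons /= -cats1 take_size_cat ?size_map.
Qed.

Lemma stack_ok_step st q1 a q om : stack_ok st ->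
  phi q1 a (last None st) q om != 0 -> stack_ok (pop st ++ om).
Proof.
case=> s ->; case/lastP: s => [|s t] /=.
  by move=> /phi_shape [_ _ H _]; have [y ->] := H erefl; exists y.
rewrite map_rcons -rcons_cons last_rcons size_rcons /= -cats1 take_size_cat ?size_map //.
move=> /phi_shape [_ _ _ H]; have [y ->] := H ltac:(by []).
by exists (s ++ y); rewrite map_cat.
Qed.

Lemma stack_ok_unstep st0 t om q1 a q : stack_ok (st0 ++ om) ->
  phi q1 a t q om != 0 -> stack_ok (st0 ++ [:: t]).
Proof.
case=> s E /phi_shape [_ _ H1 H2]; case: t H1 H2 => [t|] H1 H2.
  have [y Ey] := H2 ltac:(by []); rewrite Ey in E.
  case: st0 E => [|b st0] /=; first by case: y Ey => [|y0 y] //= Ey [].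
  case=> -> E; exists (take (size st0) s ++ [:: t]).
  by rewrite map_cat map_take -E take_size_cat.
have [y Ey] := H1 erefl; rewrite Ey in E.
case: st0 E => [|b st0] /=; first by exists [::].
case=> _ E; have : None \in [seq Some i | i <- s] by rewrite -E mem_cat inE eqxx orbT.
by case/mapP.
Qed.

Definition tgt (c : config) (q : Q) (om : seq (Delta T)) : config :=
  let '(w, p, _, st) := c in (w, move w (D q) p, q, pop st ++ om).
Definition amp (c : config) q om : C :=
  let '(w, p, qj, st) := c in phi qj (sym w p) (last None st) q om.
Arguments tgt : simpl never.
Arguments amp : simpl never.

Lemma amp_gt2 c q om : (2 < size om)%N -> amp c q om = 0.
Proof. by case: c => [[[w p] qj] st] /phi_gt2; rewrite /amp => ->. Qed.

Lemma Uent_tgt c' c :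
  U c' c = \sum_(q : Q) \sum_(om <- words) amp c q om * (tgt c q om == c')%:R.
Proof.
case: c => [[[w p] qj] st]; rewrite /Uent /Ucol big_flatten big_map -big_enum.
apply: eq_bigr => q _; rewrite big_allpairs_dep /= big_cons big_cons big_nil addr0.
have other d : D q != d -> \sum_(om <- words)
   delta qj (sym w p) (last None st) q d om * ((w, move w d p, q, pop st ++ om) == c')%:R = 0.
  by move=> nd; rewrite big1 // => om _; rewrite delta_simplified // mul0r.
rewrite /amp /tgt /reduced.
by case E: (D q); [rewrite other ?E // add0r | rewrite (other true) ?E // addr0].
Qed.

Lemma Uent_neq0 c' c : U c' c != 0 ->
  exists q om, [/\ om \in words, amp c q om != 0 & tgt c q om = c'].
Proof.
rewrite Uent_tgt => /sum_neq0_witness [q _ /sum_neq0_witness [om omw]] nz.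
exists q, om; move: nz; case: (eqVneq (tgt c q om) c') => [E|_] nz; last first.
  by rewrite mulr0 eqxx in nz.
by split => //; apply: contraNneq nz => ->; rewrite mul0r.
Qed.

Lemma valid_tgt c q om : valid c -> amp c q om != 0 -> valid (tgt c q om).
Proof.
case: c => [[[w p] qj] st] [lp ok] nz; split; first exact: move_lt.
exact: stack_ok_step nz.
Qed.

Lemma valid_Uent c' c : valid c -> U c' c != 0 -> valid c'.
Proof. by move=> vc /Uent_neq0 [q [om [_ nz <-]]]; apply: valid_tgt. Qed.

Lemma tgt_eqE w p q0 st w' p' q0' st' q om q' om' :
  (p < size w + 2)%N -> (p' < size w' + 2)%N ->
  (tgt (w', p', q0', st') q' om' == tgt (w, p, q0, st) q om) =
  [&& q' == q, w' == w, p' == p & pop st' ++ om' == pop st ++ om].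
Proof.
move=> lp lp'; rewrite /tgt !xpair_eqE.
have [->|nq] := eqVneq q' q; rewrite ?eqxx ?andbT ?andbF //=.
have [ew|nw] //= := eqVneq w' w.
by rewrite ew in lp' *; rewrite move_inj_eq.
Qed.

Lemma Uent_at_tgt w p q0 st w' p' q0' st' q om :
  (p < size w + 2)%N -> (p' < size w' + 2)%N ->
  U (tgt (w, p, q0, st) q om) (w', p', q0', st') =
  ((w' == w) && (p' == p))%:R *
   \sum_(om' <- words) amp (w', p', q0', st') q om' * (pop st' ++ om' == pop st ++ om)%:R.
Proof.
move=> lp lp'; rewrite Uent_tgt (bigD1 q) //= [X in _ + X]big1 ?addr0 => [|q' nq]; last first.
  by rewrite big1 // => om' _; rewrite tgt_eqE // (negbTE nq) mulr0.
rewrite mulr_sumr; apply: eq_bigr => om' _; rewrite tgt_eqE // eqxx /=.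
by case: (w' == w); case: (p' == p); rewrite /= ?mul0r ?mulr0 ?mul1r.
Qed.

Lemma Uent_tgt_pop_cat w p q1 s1 q2 s2 x q om :
  (p < size w + 2)%N -> pop s1 = pop s2 ++ x ->
  U (tgt (w, p, q1, s1) q om) (w, p, q2, s2) = amp (w, p, q2, s2) q (x ++ om).
Proof.
move=> lp E; rewrite Uent_at_tgt // !eqxx mul1r E -catA.
under eq_bigr => om' _ do rewrite eqseq_cat // eqxx /=.
by rewrite sum_words_le2_indicator // => /amp_gt2.
Qed.

Lemma config_neq_top w p q1 s1 q2 s2 : (q1, last None s1) != (q2, last None s2) ->
  ((w, p, q1, s1) == (w, p, q2, s2) :> config) = false.
Proof. by move=> H; apply/negbTE; apply: contra H => /eqP [-> ->]. Qed.

Lemma config_neq_size w p q1 s1 q2 s2 : size s1 != size s2 ->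
  ((w, p, q1, s1) == (w, p, q2, s2) :> config) = false.
Proof. by move=> H; apply/negbTE; apply: contra H => /eqP [_ ->]. Qed.

Definition targets (c : config) := [seq tgt c q om | q <- enum Q, om <- words].

Lemma targets_cover c1 (f : config -> C) : valid c1 ->
  (forall c, f c != 0 -> U c c1 != 0) -> support_cover f (targets c1).
Proof.
move=> v1 f_col; split.
- apply: allpairs_uniq; rewrite ?enum_uniq ?uniq_words_le2 //.
  move=> [q om] [q' om'] _ _ /= /eqP; case: c1 v1 {f_col} => [[[w p] qj] st] [lp _].
  rewrite tgt_eqE // => /and4P [/eqP -> _ _].
  by rewrite eqseq_cat // eqxx /= => /eqP ->.
- by move=> c _ /f_col; apply: valid_Uent.
- move=> c vc /f_col /Uent_neq0 [q [om [omw _ <-]]].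
  by apply: allpairs_f; rewrite ?mem_enum.
Qed.

Definition colprod c1 c2 := \sum_(c <- targets c1) (U c c1)^* * U c c2.

Lemma fin_sum_colprod c1 c2 s : valid c1 ->
  fin_sum (fun c => (U c c1)^* * U c c2) s <-> s = colprod c1 c2.
Proof.
move=> v1; apply: fin_sum_cover; apply: targets_cover => // c.
by apply: contraNneq => ->; rewrite conjC0 mul0r.
Qed.

Lemma colprod_sym c1 c2 : valid c1 -> valid c2 -> colprod c1 c2 = (colprod c2 c1)^*.
Proof.
move=> v1 v2; rewrite /colprod (@support_cover_sum_eq _ _ _ _ _ (targets c1) (targets c2)).
- rewrite rmorph_sum; apply: eq_bigr => c _.
  by rewrite rmorphM /= conjCK mulrC.
- by apply: targets_cover => // c; apply: contraNneq => ->; rewrite conjC0 mul0r.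
- by apply: targets_cover => // c; apply: contraNneq => ->; rewrite mulr0.
Qed.

Lemma colprod_expand w p q1 s1 c2 : (p < size w + 2)%N ->
  colprod (w, p, q1, s1) c2 = \sum_(q : Q) \sum_(om <- words)
     (amp (w, p, q1, s1) q om)^* * U (tgt (w, p, q1, s1) q om) c2.
Proof.
move=> lp; rewrite /colprod /targets big_allpairs_dep big_enum; apply: eq_bigr => q _.
by apply: eq_bigr => om _; rewrite (@Uent_tgt_pop_cat _ _ _ _ _ _ [::]) ?cats0.
Qed.

Lemma colprod_cell_neq w1 p1 q1 s1 w2 p2 q2 s2 :
  (p1 < size w1 + 2)%N -> (p2 < size w2 + 2)%N -> ~~ ((w2 == w1) && (p2 == p1)) ->
  colprod (w1, p1, q1, s1) (w2, p2, q2, s2) = 0.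
Proof.
move=> l1 l2 H; rewrite colprod_expand // big1 // => q _; rewrite big1 // => om _.
by rewrite Uent_at_tgt // (negbTE H) mul0r mulr0.
Qed.

Lemma colprod_not_prefix w p q1 s1 q2 s2 : (p < size w + 2)%N ->
  (size (pop s2) <= size (pop s1))%N -> take (size (pop s2)) (pop s1) != pop s2 ->
  colprod (w, p, q1, s1) (w, p, q2, s2) = 0.
Proof.
move=> lp le ne; rewrite colprod_expand // big1 // => q _; rewrite big1 // => om _.
rewrite Uent_at_tgt // big1 ?mulr0 // => om' _.
case: eqP => [E|]; last by rewrite mulr0.
by move: ne; rewrite -(takel_cat om le) -E take_size_cat ?eqxx.
Qed.

Definition overlap q1 q2 a t1 t2 (x : seq (Delta T)) :=
  \sum_(q : Q) \sum_(om <- words) (phi q1 a t1 q om)^* * phi q2 a t2 q (x ++ om).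

Lemma colprod_pop_cat w p q1 s1 q2 s2 x : (p < size w + 2)%N ->
  pop s1 = pop s2 ++ x -> colprod (w, p, q1, s1) (w, p, q2, s2) =
  overlap q1 q2 (sym w p) (last None s1) (last None s2) x.
Proof.
move=> lp E; rewrite colprod_expand //; apply: eq_bigr => q _.
by apply: eq_bigr => om _; rewrite (Uent_tgt_pop_cat _ _ _ _ lp E).
Qed.

Lemma overlap1 q1 q2 a t1 t2 t3 : overlap q1 q2 a t1 t2 [:: t3] =
  \sum_(q : Q) \sum_(t : Delta T) (phi q1 a t1 q [:: t])^* * phi q2 a t2 q [:: t3; t]
   + \sum_(q : Q) (phi q1 a t1 q [::])^* * phi q2 a t2 q [:: t3].
Proof.
rewrite -big_split; apply: eq_bigr => q _; rewrite sum_words_le2 /=.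
rewrite [X in _ + X = _]big1 => [|b _]; first by rewrite addr0 addrC.
by rewrite big1 // => c _; rewrite [phi q2 _ _ _ _]phi_gt2 ?mulr0.
Qed.

Lemma overlap2 q1 q2 a t1 t2 t3 t4 : overlap q1 q2 a t1 t2 [:: t3; t4] =
  \sum_(q : Q) (phi q1 a t1 q [::])^* * phi q2 a t2 q [:: t3; t4].
Proof.
apply: eq_bigr => q _; rewrite sum_words_le2 /= [X in _ + X]big1 ?addr0.
  by rewrite [X in _ + X]big1 ?addr0 // => b _; rewrite [phi q2 _ _ _ _]phi_gt2 ?mulr0.
by move=> b _; rewrite big1 // => c _; rewrite [phi q2 _ _ _ _]phi_gt2 ?mulr0.
Qed.

Lemma overlap_gt2 q1 q2 a t1 t2 x : (2 < size x)%N -> overlap q1 q2 a t1 t2 x = 0.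
Proof.
move=> lx; apply: big1 => q _; apply: big1 => om _.
by rewrite [phi q2 _ _ _ _]phi_gt2 ?mulr0 // size_cat (leq_trans lx) ?leq_addr.
Qed.

Definition cond1 := forall q1 s1 t1,
  \sum_(q : Q) \sum_(om <- words) `|phi q1 s1 t1 q om| ^+ 2 = 1.
Definition cond2 := forall q1 q2 s1 t1 t2, (q1, t1) != (q2, t2) ->
  \sum_(q : Q) \sum_(om <- words) (phi q1 s1 t1 q om)^* * phi q2 s1 t2 q om = 0.
Definition cond4 := forall q1 q2 s1 t1 t2 t3,
  \sum_(q : Q) \sum_(t : Delta T)
      (phi q1 s1 t1 q [:: t])^* * phi q2 s1 t2 q [:: t3; t]
    + \sum_(q : Q) (phi q1 s1 t1 q [::])^* * phi q2 s1 t2 q [:: t3] = 0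
  /\ \sum_(q : Q) (phi q1 s1 t1 q [::])^* * phi q2 s1 t2 q [:: t2; t3] = 0.

Lemma overlap_nil_norm q1 a t1 : overlap q1 q1 a t1 t1 [::] =
  \sum_(q : Q) \sum_(om <- words) `|phi q1 a t1 q om| ^+ 2.
Proof. by apply: eq_bigr => q _; apply: eq_bigr => om _; rewrite normCKC. Qed.

Section ColumnOrthonormality.
Hypotheses (h1 : cond1) (h2 : cond2) (h4 : cond4).

Lemma colprod_same_cell w p q1 s1 q2 s2 x : (p < size w + 2)%N ->
  stack_ok s1 -> stack_ok s2 -> pop s1 = pop s2 ++ x ->
  colprod (w, p, q1, s1) (w, p, q2, s2) = ((w, p, q1, s1) == (w, p, q2, s2))%:R.
Proof.
move=> lp ok1 ok2 E; rewrite (colprod_pop_cat q1 q2 lp E).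
have ne : x != [::] -> ((w, p, q1, s1) == (w, p, q2, s2) :> config) = false.
  move=> nx; apply/negbTE; apply: contra nx => /eqP [_ es].
  by move: E; rewrite es -{1}[pop s2]cats0 => /eqP; rewrite eqseq_cat // eq_sym => /andP [].
case: x E ne => [|t3 [|t4 [|t5 x]]] E ne.
- have [[<- et]|neq] := eqVneq (q1, last None s1) (q2, last None s2).
    have -> : s1 = s2 by rewrite (stack_ok_pop_cat ok1) (stack_ok_pop_cat ok2) et E cats0.
    by rewrite eqxx -et overlap_nil_norm h1.
  by rewrite config_neq_top //; apply: h2.
- by rewrite overlap1 (h4 _ _ _ _ _ _).1 ne.
- rewrite overlap2 ne //; have [->|nt] := eqVneq t3 (last None s2).
    exact: (h4 _ _ _ _ _ t4).2.
  by rewrite big1 // => q _; rewrite phi_pair_head ?mulr0.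
- by rewrite overlap_gt2 ?ne.
Qed.

Lemma colprod_orthonormal_le c1 c2 : valid c1 -> valid c2 ->
  (size (pop c2.2) <= size (pop c1.2))%N -> colprod c1 c2 = (c1 == c2)%:R.
Proof.
case: c1 c2 => [[[w1 p1] q1] s1] [[[w2 p2] q2] s2] [lp1 ok1] [lp2 ok2] /= le.
have [/andP [/eqP ew /eqP ep]|H] := boolP ((w2 == w1) && (p2 == p1)); last first.
  rewrite colprod_cell_neq // (_ : (_ == _) = false) //; apply/negbTE.
  by apply: contra H => /eqP [-> -> _ _]; rewrite !eqxx.
subst w2 p2; have [Hp|Hp] := eqVneq (take (size (pop s2)) (pop s1)) (pop s2).
  apply: (@colprod_same_cell _ _ _ _ _ _ (drop (size (pop s2)) (pop s1))) => //.
  by rewrite -{1}(cat_take_drop (size (pop s2)) (pop s1)) Hp.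
rewrite colprod_not_prefix // (_ : (_ == _) = false) //; apply/negbTE.
by apply: contra Hp => /eqP [_ ->]; rewrite take_size.
Qed.

Lemma colprod_orthonormal c1 c2 : valid c1 -> valid c2 -> colprod c1 c2 = (c1 == c2)%:R.
Proof.
move=> v1 v2; have [le|lt] := leqP (size (pop c2.2)) (size (pop c1.2)).
  exact: colprod_orthonormal_le.
by rewrite colprod_sym // colprod_orthonormal_le ?(ltnW lt) // rmorph_nat eq_sym.
Qed.

End ColumnOrthonormality.

(* [st] with its last [k] symbols replaced by [t]: a transition pushing these
   [k] symbols leads back to stack [st]. *)
Definition pred_config w pp (st : seq (Delta T)) q t k : config :=
  (w, pp, q, take (size st - k) st ++ [:: t]).

Lemma Uent_pred_config w p1 q1 st q t k : (p1 < size w + 2)%N -> (k <= size st)%N ->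
  U (w, p1, q1, st) (pred_config w (unmove w (D q1) p1) st q t k) =
  phi q (sym w (unmove w (D q1) p1)) t q1 (drop (size st - k) st).
Proof.
move=> lp lk; set pp := unmove w (D q1) p1; set m := (size st - k)%N.
have size_m : size (take m st) = m by rewrite size_takel ?leq_subr.
rewrite Uent_tgt (bigD1 q1) //= [X in _ + X = _]big1 ?addr0 => [|q' nq]; last first.
  by apply: big1 => om _; rewrite /tgt /pred_config !xpair_eqE (negbTE nq) andbF mulr0.
rewrite -[RHS]sum_words_le2_indicator => [|/phi_gt2 //]; apply: eq_bigr => om _.
rewrite /amp /tgt /pred_config last_cat size_cat size_m addn1 /= take_size_cat //.
rewrite move_unmove // !xpair_eqE !eqxx /=.
by rewrite -/m -[X in _ == X](cat_take_drop m st) eqseq_cat ?eqxx.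
Qed.

Definition push_sizes (st : seq (Delta T)) := iota 0 (minn 3 (size st).+1).

Lemma mem_push_sizes st k : (k \in push_sizes st) = (k <= 2)%N && (k <= size st)%N.
Proof. by rewrite mem_iota leq_min. Qed.

Definition preds w p1 q1 (st : seq (Delta T)) :=
  [seq pred_config w (unmove w (D q1) p1) st q tk.1 tk.2 | q <- enum Q,
     tk <- [seq (t, k) | t <- enum (Delta T), k <- push_sizes st]].

Lemma preds_uniq w p1 q1 st : uniq (preds w p1 q1 st).
Proof.
apply: allpairs_uniq; rewrite ?enum_uniq //.
  by apply: allpairs_uniq; rewrite ?enum_uniq ?iota_uniq // => -[x y] [x' y'] _ _ [-> ->].
move=> [q [t k]] [q' [t' k']]; rewrite !mem_allpairs_pair !mem_push_sizes.
move=> /and3P [_ _ /andP [_ kst]] /and3P [_ _ /andP [_ kst']] [-> E].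
have := congr1 size E; rewrite !size_cat !size_takel ?leq_subr // => /addIn Ek.
have Ekk : k = k' by rewrite -(subKn kst) -(subKn kst') Ek.
by move: E => /eqP; rewrite Ekk eqseq_cat //= => /andP [_ /eqP [->]].
Qed.

Lemma preds_cover w p1 q1 st : (p1 < size w + 2)%N -> stack_ok st ->
  support_cover (fun c => U (w, p1, q1, st) c * (U (w, p1, q1, st) c)^*)
                (preds w p1 q1 st).
Proof.
move=> lp ok; set pp := unmove w (D q1) p1.
have lpp : (pp < size w + 2)%N by apply: unmove_lt.
split; first exact: preds_uniq.
  move=> c /allpairsP [[q tk] [_ /allpairsP [[t k] [_ kk ->]] ->]] /= nz.
  have : U (w, p1, q1, st) (pred_config w pp st q t k) != 0.
    by apply: contraNneq nz => ->; rewrite mul0r.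
  rewrite mem_push_sizes in kk; rewrite Uent_pred_config ?(andP kk).2 // => nz1.
  by split => //=; apply: (stack_ok_unstep _ nz1); rewrite cat_take_drop.
move=> [[[w0 p0] q0] s0] [lp0 ok0] nz.
have : U (w, p1, q1, st) (w0, p0, q0, s0) != 0.
  by apply: contraNneq nz => ->; rewrite mul0r.
move=> /Uent_neq0 [q' [om [omw _]]]; rewrite /tgt => -[ew em eq es]; subst w0 q'.
have -> : p0 = pp by rewrite /pp -em unmove_move.
apply/allpairsP; exists (q0, (last None s0, size om)); split.
- by rewrite mem_enum.
- apply/allpairsP; exists (last None s0, size om).
  by rewrite mem_enum mem_push_sizes -mem_words_le2 omw -es size_cat leq_addl.
rewrite /pred_config /= -es size_cat addnK take_size_cat //.
by rewrite -stack_ok_pop_cat.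
Qed.

Definition row_norm q1 a t1 t2 := \sum_(q : Q) \sum_(t : Delta T)
  \sum_(om <- [:: [::]; [:: t2]; [:: t1; t2]]) `|phi q a t q1 om| ^+ 2.

Definition cond3 := forall q1 s1 t1 t2, row_norm q1 s1 t1 t2 = 1.

Lemma row_norm_Z0 q1 a t1 t1' : row_norm q1 a t1 None = row_norm q1 a t1' None.
Proof.
apply: eq_bigr => q _; apply: eq_bigr => t _.
by rewrite !big_cons !big_nil !phi_push_Z0.
Qed.

(* Row [(w, p1, q1, st)] is supported on the [pred_config]s whose transition
   pushed the last [k <= 2] symbols of [st]: the words of [row_norm]. *)
Lemma fin_sum_row_norm w p1 q1 st s : (p1 < size w + 2)%N -> stack_ok st ->
  fin_sum (fun c => U (w, p1, q1, st) c * (U (w, p1, q1, st) c)^*) s <->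
  s = row_norm q1 (sym w (unmove w (D q1) p1)) (last None (pop st)) (last None st).
Proof.
move=> lp ok; apply: (iff_trans (fin_sum_cover _ (preds_cover q1 lp ok))).
suff -> : \sum_(c <- preds w p1 q1 st) U (w, p1, q1, st) c * (U (w, p1, q1, st) c)^* =
  row_norm q1 (sym w (unmove w (D q1) p1)) (last None (pop st)) (last None st) by [].
rewrite /preds big_allpairs_dep big_enum; apply: eq_bigr => q _.
rewrite big_allpairs_dep big_enum; apply: eq_bigr => t _ /=.
rewrite big_seq (eq_bigr (fun k =>
    `|phi q (sym w (unmove w (D q1) p1)) t q1 (drop (size st - k) st)| ^+ 2)); last first.
  by move=> k; rewrite mem_push_sizes => /andP [_ kst]; rewrite Uent_pred_config // normCK.
rewrite -big_seq /push_sizes; have [st2|] := leqP 2 (size st).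
  have stn : st != [::] by apply: contraTneq st2 => ->.
  rewrite (minn_idPl (st2 : 3 <= (size st).+1)%N) !big_cons !big_nil subn0 drop_size.
  by rewrite (drop_last1 None stn) (drop_last2 None st2).
case: ok => [[|x y] ->] //= _.
by rewrite !big_cons !big_nil phi_push_Z0 normr0 expr0n !addr0.
Qed.

Lemma sym_surj (a : Gam Sigma) : exists w p, (p < size w + 2)%N /\ sym w p = a.
Proof. by case: a => [a|[|]]; [exists [:: a], 1%N | exists [::], 1%N | exists [::], 0%N]. Qed.

Section Necessity.
Local Notation stk s := (None :: map Some s).

Lemma stack_ok_stk (s : seq T) : stack_ok (stk s). Proof. by exists s. Qed.

Section Columns.
Hypothesis U_isometry : forall c1 c2, valid c1 -> valid c2 ->
  fin_sum (fun c => (U c c1)^* * U c c2) (c1 == c2)%:R.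

Lemma overlap_of_isometry w p q1 q2 s1 s2 x : (p < size w + 2)%N ->
  pop (stk s1) = pop (stk s2) ++ x ->
  overlap q1 q2 (sym w p) (last None (stk s1)) (last None (stk s2)) x =
  ((w, p, q1, stk s1) == (w, p, q2, stk s2) :> config)%:R.
Proof.
move=> lp E; rewrite -(colprod_pop_cat q1 q2 lp E).
have v1 : valid (w, p, q1, stk s1) by split; last exact: stack_ok_stk.
by apply/esym/(fin_sum_colprod _ _ v1)/U_isometry => //; split; last exact: stack_ok_stk.
Qed.

Lemma isometry_cond1 : cond1.
Proof.
move=> q1 a t; have [w [p [lp <-]]] := sym_surj a; rewrite -overlap_nil_norm.
case: t => [b|].
  by rewrite (@overlap_of_isometry w p q1 q1 [:: b] [:: b] [::]) ?eqxx.
by rewrite (@overlap_of_isometry w p q1 q1 [::] [::] [::]) ?eqxx.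
Qed.

Lemma isometry_cond2 : cond2.
Proof.
move=> q1 q2 a t1 t2 ne; have [w [p [lp <-]]] := sym_surj a.
case: t1 ne => [b1|] ne; case: t2 ne => [b2|] ne.
- have := @overlap_of_isometry w p q1 q2 [:: b1] [:: b2] [::] lp erefl.
  by rewrite config_neq_top.
- apply: big1 => q _; apply: big1 => om _; apply: conjC_mul_eq0.
  by have [/phi_Some_Z0_in|/phi_Z0_notin] := boolP (None \in om); [left|right].
- apply: big1 => q _; apply: big1 => om _; apply: conjC_mul_eq0.
  by have [/phi_Some_Z0_in|/phi_Z0_notin] := boolP (None \in om); [right|left].
- have := @overlap_of_isometry w p q1 q2 [::] [::] [::] lp erefl.
  by rewrite config_neq_top.
Qed.

Lemma isometry_cond4 : cond4.
Proof.
move=> q1 q2 a t1 t2 t3; have [w [p [lp <-]]] := sym_surj a.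
case: t1 => [b1|]; last first.
  split; last by apply: big1 => q _; apply: conjC_mul_eq0; left; apply: phi_Z0_notin.
  rewrite !big1 ?addr0 // => q _; first by apply: conjC_mul_eq0; left; apply: phi_Z0_notin.
  apply: big1 => -[t|] _; apply: conjC_mul_eq0; last by right; apply: phi_push_Z0.
  by left; apply: phi_Z0_notin.
split.
  rewrite -overlap1; case: t3 => [b3|]; case: t2 => [b2|].
  - by rewrite (@overlap_of_isometry w p q1 q2 [:: b3; b1] [:: b2]) ?config_neq_size.
  - apply: big1 => q _; apply: big1 => om _; apply: conjC_mul_eq0; right.
    exact: phi_Z0_Some.
  - apply: big1 => q _; apply: big1 => om _; apply: conjC_mul_eq0; right.
    by apply: phi_Some_Z0_in; rewrite inE eqxx.
  - by rewrite (@overlap_of_isometry w p q1 q2 [:: b1] [::]) ?config_neq_size.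
case: t3 => [b3|]; last by apply: big1 => q _; apply: conjC_mul_eq0; right; apply: phi_push_Z0.
rewrite -overlap2; case: t2 => [b2|].
  by rewrite (@overlap_of_isometry w p q1 q2 [:: b2; b3; b1] [:: b2]) ?config_neq_size.
by rewrite (@overlap_of_isometry w p q1 q2 [:: b3; b1] [::]) ?config_neq_size.
Qed.

End Columns.

Lemma coisometry_cond3 : (forall c1 c2, valid c1 -> valid c2 ->
  fin_sum (fun c => U c1 c * (U c2 c)^*) (c1 == c2)%:R) -> cond3.
Proof.
move=> U_coisometry q1 a t1 t2; have [w [p0 [lp0 <-]]] := sym_surj a.
pose p1 := move w (D q1) p0; have lp1 : (p1 < size w + 2)%N by apply: move_lt.
have row_norm1 s : valid (w, p1, q1, stk s) ->
    row_norm q1 (sym w p0) (last None (pop (stk s))) (last None (stk s)) = 1.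
  move=> v; have := U_coisometry _ _ v v; rewrite eqxx fin_sum_row_norm //; last by exists s.
  by rewrite unmove_move // => <-.
case: t2 => [b2|]; last first.
  by rewrite (row_norm_Z0 _ _ _ None) (row_norm1 [::]) //; split; last exists [::].
case: t1 => [b1|].
  by rewrite (row_norm1 [:: b1; b2]) //; split; last exists [:: b1; b2].
by rewrite (row_norm1 [:: b2]) //; split; last exists [:: b2].
Qed.

End Necessity.
End Evolution.

Unset Implicit Arguments.

Theorem theorem2 (C : numClosedFieldType) (Q Sigma T : finType)
  (q0 : Q) (Qa Qr : {set Q})
  (delta : Q -> Gam Sigma -> Delta T -> Q -> bool -> seq (Delta T) -> C)
  (D : Q -> bool) :
  [disjoint Qa & Qr] ->
  QPA_transfun delta ->
  simplified delta D ->
  let phi := reduced delta D in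
  unitary_U delta <->
  [/\ (* (1) *)
      forall q1 s1 t1,
        \sum_(q : Q) \sum_(om <- words_le2 T) `|phi q1 s1 t1 q om| ^+ 2 = 1,
      (* (2) *)
      forall q1 q2 s1 t1 t2, (q1, t1) != (q2, t2) ->
        \sum_(q : Q) \sum_(om <- words_le2 T)
           (phi q1 s1 t1 q om)^* * phi q2 s1 t2 q om = 0,
      (* (3) *)
      forall q1 s1 t1 t2,
        \sum_(q : Q) \sum_(t : Delta T) \sum_(om <- [:: [::]; [:: t2]; [:: t1; t2]])
           `|phi q s1 t q1 om| ^+ 2 = 1
    & (* (4) *)
      forall q1 q2 s1 t1 t2 t3,
        \sum_(q : Q) \sum_(t : Delta T)
            (phi q1 s1 t1 q [:: t])^* * phi q2 s1 t2 q [:: t3; t]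
          + \sum_(q : Q) (phi q1 s1 t1 q [::])^* * phi q2 s1 t2 q [:: t3] = 0
        /\ \sum_(q : Q) (phi q1 s1 t1 q [::])^* * phi q2 s1 t2 q [:: t2; t3] = 0].
Proof.
move=> _ delta_QPA delta_simplified phi; split.
  case=> U_isometry U_coisometry; split.
  - exact: isometry_cond1.
  - exact: isometry_cond2.
  - exact: coisometry_cond3.
  - exact: isometry_cond4.
case=> h1 h2 h3 h4.
have U_isometry c1 c2 : valid_config c1 -> valid_config c2 ->
    fin_sum (fun c => (Uent delta c c1)^* * Uent delta c c2) (c1 == c2)%:R.
  move=> v1 v2; apply/(fin_sum_colprod delta_QPA delta_simplified _ _ v1).
  by rewrite colprod_orthonormal.
split => //; apply: coisometry_of_unit_rows => // -[[[w p] q] st] [lp ok].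
apply/(fin_sum_row_norm delta_QPA delta_simplified _ _ lp ok).
by symmetry; apply: h3.
Qed.
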